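(* Let $G=(V,E)$ be a connected graph with at least two vertices and let $v\in\mathrm{core}(G)$. Let $C_1,\ldots,C_k$ be the connected components of $G-N[v]$, and for $1\le i\le k$ let $N_i$ be the set of neighbors of $v$ having at least one neighbor in $C_i$. If $N_i$ induces a clique in $G$ for every $i\in\{1,\ldots,k\}$, then $\gamma(G-v)>\gamma(G)$, i.e. $v\in V^+$.
   Context: All graphs are finite, simple and undirected. $N[v]$ is the closed neighborhood of $v$; $G-X$ denotes the subgraph induced by $V\setminus X$, and $G-v=G-\{v\}$. $\gamma(G)$ is the domination number; a minimum dominating set (mds) is a dominating set of size $\gamma(G)$; $\mathrm{core}(G)$ is the set of vertices in every mds. $V^+=\{v\in V:\gamma(G-v)>\gamma(G)\}$. *)

(* A simple graph: finite vertex type T, symmetric irreflexive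
   adjacency relation e. Induced subgraphs are represented by vertex sets S. *)
From mathcomp Require Import all_boot.
Set Implicit Arguments. Unset Strict Implicit. Unset Printing Implicit Defensive.

Definition simple_graph (T : finType) (e : rel T) : Prop :=
  symmetric e /\ irreflexive e.

Definition cnbh (T : finType) (e : rel T) (v : T) : {set T} :=
  [set x | (x == v) || e v x].

Definition dominates_in (T : finType) (e : rel T) (S D : {set T}) : bool :=
  (D \subset S) && [forall x in S, (x \in D) || [exists y in D, e x y]].

(* domination number of G[S]: the minimum size of a dominating set of G[S]
   (S itself dominates S, so #|S| is a valid initial value for the min) *)
Definition gamma_in (T : finType) (e : rel T) (S : {set T}) : nat :=
  \big[minn/#|S|]_(D : {set T} | dominates_in e S D) #|D|.

Definition gamma (T : finType) (e : rel T) : nat := gamma_in e [set: T].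

Definition is_mds (T : finType) (e : rel T) (D : {set T}) : bool :=
  dominates_in e [set: T] D && (#|D| == gamma e).

Definition core (T : finType) (e : rel T) : {set T} :=
  [set v | [forall D : {set T}, is_mds e D ==> (v \in D)]].

Definition induced_rel (T : finType) (e : rel T) (S : {set T}) : rel T :=
  fun a b => [&& e a b, a \in S & b \in S].

Definition conn_in (T : finType) (e : rel T) (S : {set T}) (x y : T) : bool :=
  [&& x \in S, y \in S & connect (induced_rel e S) x y].

Definition component (T : finType) (e : rel T) (S : {set T}) (x : T) : {set T} :=
  [set y | conn_in e S x y].

Definition connected_graph (T : finType) (e : rel T) : Prop :=
  forall x y : T, connect e x y.

Definition is_clique (T : finType) (e : rel T) (A : {set T}) : Prop :=
  forall x y, x \in A -> y \in A -> x != y -> e x y.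

From mathcomp Require Import all_boot.
From mathcomp Require Import zify.
Set Implicit Arguments. Unset Strict Implicit. Unset Printing Implicit Defensive.

(* Let D be a minimum dominating set of G, so v \in D, and D' one of G - v,
   and suppose |D'| <= |D|.  For a union W of components of G - N[v] and a set
   Q of neighbours of v that contains the vertices of D adjacent to both v and W
   and dominates the neighbours of v adjacent to W, the set
   (D' \ W) + (D /\ W) + Q dominates G and avoids v, so it has more than |D|
   elements.  As the neighbours of v adjacent to a component form a clique, Q
   can be one vertex for a component C with no such D-vertex, and the D-vertices
   adjacent to v and W (call them Q_W) when every component of W has one.  Now
   take W minimal among unions of components with |D /\ W| + |Q_W| < |D' /\ W|;
   W = G - N[v] qualifies because D' avoids N(v) and |D'| = |D|.  If W contains
   a component C of the first kind, minimality of W forces |D /\ C| < |D' /\ C|,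
   against the one-vertex exchange on C; otherwise the exchange on W itself is
   too small. *)

Section Domination.
Variables (T : finType) (e : rel T).

Definition dominated (D : {set T}) (x : T) : bool :=
  (x \in D) || [exists y in D, e x y].

Definition touches (W : {set T}) (u : T) : bool := [exists c in W, e u c].

Lemma dominated_sub (A B : {set T}) x :
  A \subset B -> dominated A x -> dominated B x.
Proof.
move=> /subsetP sAB; rewrite /dominated => /orP[/sAB -> //|/exists_inP[y /sAB yB exy]].
by apply/orP; right; apply/exists_inP; exists y.
Qed.

Lemma dominates_inP (S D : {set T}) :
  reflect (D \subset S /\ {in S, forall x, dominated D x}) (dominates_in e S D).
Proof. by apply: (iffP andP) => -[sDS /forall_inP]. Qed.

Lemma gamma_in_min (S D : {set T}) : dominates_in e S D -> gamma_in e S <= #|D|.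
Proof.
move=> domD; rewrite /gamma_in.
have : D \in index_enum {set T} by rewrite mem_index_enum.
elim: (index_enum _) => // D0 r IHr; rewrite inE big_cons => /orP[/eqP<-|Dr].
  by rewrite domD geq_minl.
by case: ifP => _; rewrite ?geq_min IHr ?orbT.
Qed.

Lemma gamma_in_attained (S : {set T}) :
  exists2 D, dominates_in e S D & #|D| = gamma_in e S.
Proof.
have domS : dominates_in e S S.
  by apply/dominates_inP; split=> // x xS; rewrite /dominated xS.
rewrite /gamma_in.
apply: (big_ind (fun n => exists2 D, dominates_in e S D & #|D| = n)).
- by exists S.
- by move=> m n [Dm ? <-] [Dn ? <-]; rewrite /minn; case: ltnP => _;
    [exists Dm | exists Dn].
- by move=> D domD; exists D.
Qed.

Lemma core_dominating_card v (Y : {set T}) :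
  v \in core e -> dominates_in e [set: T] Y -> v \notin Y -> gamma e < #|Y|.
Proof.
move=> vcore domY vY; rewrite ltn_neqAle gamma_in_min // andbT.
apply: contra vY => /eqP gammaY.
by move: vcore; rewrite inE => /forallP/(_ Y); rewrite /is_mds domY gammaY eqxx.
Qed.

Lemma touches_sub (A B : {set T}) u : A \subset B -> touches A u -> touches B u.
Proof.
by move=> /subsetP sAB /exists_inP[c cA euc]; apply/exists_inP; exists c; rewrite ?sAB.
Qed.

Definition closed_in (S W : {set T}) : Prop :=
  W \subset S /\ {in W & S, forall c y, e c y -> y \in W}.

Lemma closed_in_refl (S : {set T}) : closed_in S S.
Proof. by split. Qed.

Lemma mem_component (S : {set T}) x : x \in S -> x \in component e S x.
Proof. by move=> xS; rewrite inE /conn_in xS connect0. Qed.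

Lemma component_closed (S : {set T}) x : x \in S -> closed_in S (component e S x).
Proof.
move=> xS; split; first by apply/subsetP => y; rewrite inE => /and3P[].
move=> c y; rewrite !inE => /and3P[_ cS xc] yS ecy.
rewrite /conn_in xS yS (connect_trans xc) //.
by apply: connect1; rewrite /induced_rel ecy cS yS.
Qed.

Lemma component_sub (S W : {set T}) x :
  closed_in S W -> x \in W -> component e S x \subset W.
Proof.
move=> [sWS clW] xW; apply/subsetP => y; rewrite inE => /and3P[_ _ /connectP[p]].
elim: p x xW => [|z p IHp] x xW /= => [_ -> //|/andP[/and3P[exz _ zS] pz] yz].
exact: IHp (clW x z xW zS exz) pz yz.
Qed.

Hypothesis sym_e : symmetric e.

Lemma closed_inD (S W C : {set T}) :
  closed_in S W -> closed_in S C -> closed_in S (W :\: C).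
Proof.
move=> [sWS clW] [sCS clC]; split; first exact: subset_trans (subsetDl W C) sWS.
move=> c y; rewrite !inE => /andP[cC cW] yS ecy; rewrite (clW c y cW yS ecy) andbT.
apply: contra cC => yC; apply: clC yC (subsetP sWS c cW) _.
by rewrite sym_e.
Qed.

End Domination.

Section Neighbourhood.
Variables (T : finType) (e : rel T) (v : T).
Hypotheses (sym_e : symmetric e) (irr_e : irreflexive e).
Local Notation S := (~: cnbh e v).

Lemma neighbour_exists : connected_graph e -> 1 < #|T| -> exists u, e v u.
Proof.
move=> conn T2; have /card_gt0P[y] : 0 < #|[set~ v]| by rewrite cardsC1; lia.
rewrite !inE => yv.
have /connectP[[|z p] /= vp yp] := conn v y; first by rewrite yp eqxx in yv.
by case/andP: vp => evz _; exists z.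
Qed.

Lemma closed_touching_neighbour (W : {set T}) x :
  connected_graph e -> closed_in e S W -> x \in W -> exists2 p, e v p & touches e W p.
Proof.
move=> conn [sWS clW] xW; have /connectP[p] := conn x v.
elim: p x xW => [|z p IHp] x xW /=.
  by move=> _ xv; move: (subsetP sWS x xW); rewrite xv !inE eqxx.
case/andP=> exz zp vp; have xS := subsetP sWS x xW.
case: (boolP (z \in S)) => [zS|]; first exact: IHp (clW x z xW zS exz) zp vp.
rewrite !inE negbK => /orP[/eqP zv|evz].
  by move: xS; rewrite !inE -zv sym_e exz orbT.
by exists z => //; apply/exists_inP; exists x; rewrite // sym_e.
Qed.

Lemma dominates_setU1 (D : {set T}) u :
  dominates_in e [set~ v] D -> e v u -> dominates_in e [set: T] (u |: D).
Proof.
move=> /dominates_inP[_ domD] evu; apply/dominates_inP; split=> [|x _].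
  exact: subsetT.
case: (eqVneq x v) => [->|xv].
  by apply/orP; right; apply/exists_inP; exists u; rewrite ?setU11.
by apply: dominated_sub (subsetUr _ _) (domD x _); rewrite !inE.
Qed.

Lemma swap_dominates (D D' W Q : {set T}) :
  dominates_in e [set: T] D -> dominates_in e [set~ v] D' -> closed_in e S W ->
  Q \subset [set u | e v u] -> Q != set0 ->
  {in D, forall q, e v q -> touches e W q -> q \in Q} ->
  (forall w, e v w -> touches e W w -> dominated e Q w) ->
  dominates_in e [set: T] (D' :\: W :|: D :&: W :|: Q) /\
  v \notin D' :\: W :|: D :&: W :|: Q.
Proof.
move=> /dominates_inP[_ domD] /dominates_inP[sD'v domD'] [sWS clW] sQN.
case/set0Pn=> q0 q0Q DQ NQ.
have sD'Y : D' :\: W \subset D' :\: W :|: D :&: W :|: Q by rewrite -setUA subsetUl.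
have sDY : D :&: W \subset D' :\: W :|: D :&: W :|: Q by rewrite setUAC subsetUr.
have sQY : Q \subset D' :\: W :|: D :&: W :|: Q by rewrite subsetUr.
have vW : v \notin W by apply/negP => /(subsetP sWS); rewrite !inE eqxx.
split; last first.
  rewrite !inE (negbTE vW) /= andbF orbF negb_or; apply/andP; split.
    by apply/negP => /(subsetP sD'v); rewrite !inE eqxx.
  by apply/negP => /(subsetP sQN); rewrite inE irr_e.
apply/dominates_inP; split=> [|x _]; first exact: subsetT.
case: (eqVneq x v) => [->|xv].
  apply/orP; right; apply/exists_inP; exists q0; first exact: subsetP sQY _ q0Q.
  by move: (subsetP sQN q0 q0Q); rewrite inE.
case: (boolP (e v x && touches e W x)) => [/andP[evx xW]|xNW].
  exact: dominated_sub sQY (NQ x evx xW).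
case: (boolP (x \in W)) => xW.
  have xS := subsetP sWS x xW.
  case/orP: (domD x (in_setT x)) => [xD|/exists_inP[d dD exd]].
    by apply: dominated_sub sDY _; rewrite /dominated inE xD xW.
  apply/orP; right; apply/exists_inP; exists d => //.
  case: (boolP (e v d)) => [evd|nvd].
    by apply: subsetP sQY _ (DQ d dD evd _); apply/exists_inP; exists x; rewrite // sym_e.
  have dS : d \in S.
    rewrite !inE negb_or nvd andbT; apply: contraTneq xS => dv.
    by rewrite !inE negbK -dv sym_e exd orbT.
  by apply: (subsetP sDY); rewrite inE dD (clW x d xW dS exd).
have xv' : x \in [set~ v] by rewrite !inE.
case/orP: (domD' x xv') => [xD'|/exists_inP[d dD' exd]].
  by apply: dominated_sub sD'Y _; rewrite /dominated inE xD' xW.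
apply/orP; right; apply/exists_inP; exists d => //; apply: (subsetP sD'Y).
rewrite inE dD' andbT; apply: contra xW => dW.
have xS : x \in S.
  rewrite !inE negb_or xv; apply: contra xNW => evx.
  by rewrite evx; apply/exists_inP; exists d.
by apply: clW dW xS _; rewrite sym_e.
Qed.

End Neighbourhood.

Section Exchange.
Variables (T : finType) (e : rel T) (v : T) (D D' : {set T}).
Hypotheses (sym_e : symmetric e) (irr_e : irreflexive e).
Hypotheses (conn : connected_graph e) (card_T : 1 < #|T|).
Local Notation S := (~: cnbh e v).
Hypothesis clique_nbh_component : forall x, x \in S ->
  is_clique e [set u | e v u && touches e (component e S x) u].
Hypotheses (domD : dominates_in e [set: T] D) (domD' : dominates_in e [set~ v] D').
Hypothesis D_lt_avoiding : forall Y, dominates_in e [set: T] Y -> v \notin Y -> #|D| < #|Y|.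
Hypothesis D'_le_D : #|D'| <= #|D|.

Definition touching_nbhD (W : {set T}) : {set T} := [set q in D | e v q && touches e W q].

Lemma swap_card (W Q : {set T}) :
  closed_in e S W -> Q \subset [set u | e v u] -> Q != set0 ->
  {in D, forall q, e v q -> touches e W q -> q \in Q} ->
  (forall w, e v w -> touches e W w -> dominated e Q w) ->
  #|D' :&: W| < #|D :&: W| + #|Q|.
Proof.
move=> clW sQN Q0 DQ NQ.
have [domY vY] := swap_dominates sym_e irr_e domD domD' clW sQN Q0 DQ NQ.
have := D_lt_avoiding domY vY; rewrite !cardsU.
have := cardsID W D'; lia.
Qed.

Lemma isolated_component_card x : x \in S -> touching_nbhD (component e S x) = set0 ->
  #|D' :&: component e S x| <= #|D :&: component e S x|.
Proof.
move=> xS noD; set C := component e S x in noD *.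
have clC : closed_in e S C := component_closed e xS.
have [p evp pC] := closed_touching_neighbour sym_e conn clC (mem_component e xS).
suff : #|D' :&: C| < #|D :&: C| + #|[set p]| by rewrite cards1 addn1 ltnS.
apply: swap_card => //.
- by rewrite sub1set inE.
- by apply/set0Pn; exists p; rewrite inE.
- move=> q qD evq qC; have : q \in touching_nbhD C by rewrite inE qD evq qC.
  by rewrite noD in_set0.
move=> w evw wC; case: (eqVneq w p) => [->|wp]; first by rewrite /dominated set11.
apply/orP; right; apply/exists_inP; exists p; rewrite ?set11 //.
by apply: (clique_nbh_component xS) wp; rewrite inE ?evw ?evp.
Qed.

Lemma linked_closed_card (W : {set T}) x : closed_in e S W -> x \in W ->
  (forall y, y \in W -> touching_nbhD (component e S y) != set0) ->
  #|D' :&: W| < #|D :&: W| + #|touching_nbhD W|.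
Proof.
move=> clW xW linked; have sWS := clW.1.
have linkedW y : y \in W -> exists2 q, q \in touching_nbhD W &
    q \in touching_nbhD (component e S y).
  move=> yW; have /set0Pn[q] := linked y yW.
  rewrite !inE => /and3P[qD evq qC]; exists q; rewrite !inE qD evq ?qC //=.
  exact: touches_sub (component_sub clW yW) qC.
apply: swap_card => //.
- by apply/subsetP => q; rewrite !inE => /and3P[].
- by have [q qW _] := linkedW x xW; apply/set0Pn; exists q.
- by move=> q qD evq qW; rewrite inE qD evq qW.
move=> w evw /exists_inP[c cW ewc]; have [q qW qC] := linkedW c cW.
case: (eqVneq w q) => [->|wq]; first by rewrite /dominated qW.
apply/orP; right; apply/exists_inP; exists q => //.
have cS := subsetP sWS c cW.
apply: (clique_nbh_component cS) wq; last by move: qC; rewrite !inE => /andP[].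
by rewrite inE evw; apply/exists_inP; exists c; rewrite ?mem_component.
Qed.

Lemma notin_D' : v \notin D'.
Proof.
by case/dominates_inP: domD' => sD'v _; apply/negP => /(subsetP sD'v); rewrite !inE eqxx.
Qed.

Lemma notin_setU1_D' u : e v u -> v \notin u |: D'.
Proof.
move=> evu; rewrite in_setU1 negb_or notin_D' andbT.
by apply: contraTneq evu => ->; rewrite irr_e.
Qed.

Lemma mem_D : v \in D.
Proof. by apply: contraT => vD; have := D_lt_avoiding domD vD; rewrite ltnn. Qed.

Lemma card_D' : #|D'| = #|D|.
Proof.
apply/eqP; rewrite eqn_leq D'_le_D /=.
have [u evu] := neighbour_exists v conn card_T.
have := D_lt_avoiding (dominates_setU1 domD' evu) (notin_setU1_D' evu).
by rewrite cardsU1; have := leq_b1 (u \notin D'); lia.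
Qed.

Lemma D'_sub : D' \subset S.
Proof.
apply/subsetP => x xD'; rewrite !inE negb_or; apply/andP; split.
  by apply: contraTneq xD' => ->; apply: notin_D'.
apply/negP => evx.
have := D_lt_avoiding (dominates_setU1 domD' evx) (notin_setU1_D' evx).
by rewrite cardsU1 xD' card_D' ltnn.
Qed.

Lemma card_D_gt : #|D :&: S| + #|touching_nbhD S| < #|D|.
Proof.
rewrite -(cardsID S D) ltn_add2l.
have vQ : v \notin touching_nbhD S by rewrite inE irr_e andbF.
have sub : v |: touching_nbhD S \subset D :\: S.
  apply/subsetP => q; rewrite !inE => /predU1P[->|/and3P[qD evq _]].
    by rewrite mem_D eqxx.
  by rewrite qD evq orbT.
by move: (subset_leq_card sub); rewrite cardsU1 vQ.
Qed.

Lemma closed_card_le (W : {set T}) : closed_in e S W ->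
  #|D' :&: W| <= #|D :&: W| + #|touching_nbhD W|.
Proof.
move: {2}#|W| (erefl #|W|) => n; elim/ltn_ind: n W => n IHn W cardW clW.
rewrite leqNgt; apply/negP => excess.
have /set0Pn[x /setIP[_ xW]] : D' :&: W != set0 by rewrite -card_gt0; lia.
case: (boolP [exists y in W, touching_nbhD (component e S y) == set0]); last first.
  rewrite negb_exists_in => /forall_inP linked.
  by have := linked_closed_card clW xW linked; lia.
case/exists_inP=> y yW /eqP isolated; set C := component e S y in isolated.
have yS := subsetP clW.1 y yW.
have sCW : C \subset W := component_sub clW yW.
have sameQ : touching_nbhD (W :\: C) = touching_nbhD W.
  apply/setP => q; rewrite !inE; case qD: (q \in D); case evq: (e v q) => //=.
  apply/idP/idP; first exact: touches_sub (subsetDl _ _).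
  case/exists_inP=> c cW eqc; apply/exists_inP; exists c => //; rewrite inE cW andbT.
  apply: contraT => /negbNE cC; have : q \in touching_nbhD C.
    by rewrite inE qD evq; apply/exists_inP; exists c.
  by rewrite isolated in_set0.
have ltC : #|W :\: C| < n.
  have : 0 < #|C| by apply/card_gt0P; exists y; apply: mem_component.
  by have := cardsID C W; rewrite (setIidPr sCW); lia.
have := IHn _ ltC (W :\: C) erefl (closed_inD sym_e clW (component_closed e yS)).
have splitW X : #|X :&: W| = #|X :&: (W :\: C)| + #|X :&: C|.
  by rewrite -(cardsID C (X :&: W)) -setIA (setIidPr sCW) setIDA addnC.
have : #|D' :&: C| <= #|D :&: C| := isolated_component_card yS isolated.
by rewrite sameQ; move: excess; rewrite (splitW D) (splitW D'); lia.
Qed.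

Lemma exchange_contradiction : False.
Proof.
have := closed_card_le (closed_in_refl e S).
by rewrite (setIidPl D'_sub) card_D'; have := card_D_gt; lia.
Qed.

End Exchange.

Theorem lemma3 (T : finType) (e : rel T) (v : T) :
  simple_graph e -> connected_graph e -> 2 <= #|T| ->
  v \in core e ->
  (forall x : T, x \in ~: cnbh e v ->
     is_clique e [set u | e v u &&
        [exists c in component e (~: cnbh e v) x, e u c]]) ->
  gamma e < gamma_in e [set~ v].
Proof.
move=> [sym_e irr_e] conn card_T vcore cliques; rewrite ltnNge; apply/negP => le_gamma.
have [D domD cardD] := gamma_in_attained e [set: T].
have [D' domD' cardD'] := gamma_in_attained e [set~ v].
apply: (exchange_contradiction sym_e irr_e conn card_T cliques domD domD').
  by move=> Y domY vY; rewrite cardD; apply: core_dominating_card vcore domY vY.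
by rewrite cardD' cardD.
Qed.
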